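(* Let $q\in\mathbb{C}$ with $0<|q|<1$ and $l,m,n,u\in\mathbb{N}$. Then \[ \sum_{k=0}^\infty\frac{q^{k^2+uk} (q)_{l+m+n-k}} {(q)_k (q)_{l-k}(q)_{m-k}(q)_{n-k} (q)_{u+k}} =\sum_{k=-\infty}^\infty\frac{(-1)^k q^{(3k^2-k)/2} (q)_{l+m}(q)_{l+n}(q)_{m+n}(q)_{u-1}} {(q)_{l-k}(q)_{m-k}(q)_{n-k}(q)_{u-k}(q)_{l+k}(q)_{m+k}(q)_{n+k}(q)_{u+k-1}}, \] and \[ \sum_{k=0}^\infty\frac{q^{k^2+(u-1)k} (q)_{l+m+n-k}} {(q)_k (q)_{l-k}(q)_{m-k}(q)_{n-k}(q)_{u+k}} =\sum_{k=-\infty}^\infty\frac{(-1)^k q^{(3k^2+k)/2} (q)_{l+m}(q)_{m+n}(q)_{l+n}(q)_{u-1}} {(q)_{l-k}(q)_{m-k}(q)_{n-k}(q)_{u-k}(q)_{l+k}(q)_{m+k}(q)_{n+k}(q)_{u+k-1}}. \]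
   Context: For an integer $n$, $(q)_n=(q;q)_n$ with $(q)_0=1$ and $(q)_n=(1-q)(1-q^2)\cdots(1-q^n)$ for $n\ge1$; for $n<0$ one uses the convention $1/(q)_n=0$. *)

From Stdlib Require Import Reals ZArith.
From Coquelicot Require Import Coquelicot.
Open Scope C_scope.

Fixpoint qpoch (q : Complex.C) (n : nat) : Complex.C :=
  match n with
  | O => 1
  | S n' => qpoch q n' * (1 - Cpow q (S n'))
  end.

(* 1/(q)_n for an integer n, with the convention 1/(q)_n = 0 for n < 0 *)
Definition qpinv (q : Complex.C) (z : Z) : Complex.C :=
  if (z <? 0)%Z then 0 else / qpoch q (Z.to_nat z).

Definition is_zseries (b : Z -> Complex.C) (s : Complex.C) : Prop :=
  exists s1 s2 : Complex.C,
    is_series (fun n : nat => b (Z.of_nat n)) s1 /\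
    is_series (fun n : nat => b (- Z.of_nat (S n))%Z) s2 /\
    s = s1 + s2.

Definition zsign (k : Z) : Complex.C := Cpow (-1) (Z.abs_nat k).

From Stdlib Require Import Reals ZArith Lia Lra.
From Coquelicot Require Import Coquelicot.
Open Scope C_scope.

(* Both sides are finite sums.  The q-Pfaff-Saalschutz summation writes the product of
   q-factorials [saalschutz_value l m n k] as a sum over j of a weight times
   1/((q)_(j-k) (q)_(j+k)).  Exchanging the sums, the inner sum over k is evaluated by the
   Bailey pair

     sum_k (-1)^k q^(k(k-1)/2) (q)_u / ((q)_(u-k) (q)_(u+k) (q)_(N-k) (q)_(N+k))
       = q^(uN) / ((q)_N (q)_(N+u)),

   which follows from q-Chu-Vandermonde and the orthogonality relation
   sum_k (-1)^k q^(k(k-1)/2) / ((q)_(j-k) (q)_(j+k)) = [j = 0].  This turns the left-hand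
   side into sum_k [bailey_alpha u k] * [saalschutz_value l m n k], and pairing k with -k
   gives the pentagonal exponents of the right-hand side.  Each terminating summation is
   proved by creative telescoping: an explicit certificate yields a first-order recurrence in
   one parameter, which the closed form satisfies as well. *)

Definition Czpow (q : C) (z : Z) : C :=
  match z with
  | Z0 => 1
  | Zpos p => Cpow q (Pos.to_nat p)
  | Zneg p => / Cpow q (Pos.to_nat p)
  end.

Fixpoint zsum (B : nat) (f : Z -> C) : C :=
  match B with
  | O => f 0%Z
  | S B' => f (- Z.of_nat B)%Z + zsum B' f + f (Z.of_nat B)
  end.

Section BilateralSums.

Implicit Types (B : nat) (f g h : Z -> C).

Lemma zsum_S B f :
  zsum (S B) f = f (- Z.of_nat (S B))%Z + zsum B f + f (Z.of_nat (S B)).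
Proof. reflexivity. Qed.

Lemma zsum_ext B f g :
  (forall k, (- Z.of_nat B <= k <= Z.of_nat B)%Z -> f k = g k) -> zsum B f = zsum B g.
Proof.
  induction B; intros Hfg; simpl.
  - apply Hfg; lia.
  - rewrite IHB by (intros; apply Hfg; lia).
    rewrite !Hfg by lia; reflexivity.
Qed.

Lemma zsum_eq0 B f :
  (forall k, (- Z.of_nat B <= k <= Z.of_nat B)%Z -> f k = 0) -> zsum B f = 0.
Proof.
  induction B; intros Hf; simpl.
  - apply Hf; lia.
  - rewrite IHB by (intros; apply Hf; lia).
    rewrite !Hf by lia; ring.
Qed.

Lemma zsum_plus B f g : zsum B (fun k => f k + g k) = zsum B f + zsum B g.
Proof. induction B; simpl; [|rewrite IHB]; ring. Qed.

Lemma zsum_scal B (c : C) f : zsum B (fun k => c * f k) = c * zsum B f.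
Proof. induction B; simpl; [|rewrite IHB]; ring. Qed.

Lemma zsum_swap B B' (f : Z -> Z -> C) :
  zsum B (fun k => zsum B' (f k)) = zsum B' (fun j => zsum B (fun k => f k j)).
Proof. induction B; simpl; [|rewrite IHB, <- !zsum_plus]; reflexivity. Qed.

Lemma zsum_reflect B f : zsum B (fun k => f (- k)%Z) = zsum B f.
Proof. induction B; simpl; [|rewrite IHB]; ring. Qed.

Lemma zsum_symmetric B f g :
  (forall k, f k + f (- k)%Z = g k + g (- k)%Z) -> zsum B f = zsum B g.
Proof.
  intros Hfg.
  assert (H2 : 2 * zsum B f = 2 * zsum B g).
  { replace (2 * zsum B f) with (zsum B f + zsum B (fun k => f (- k)%Z))
      by (rewrite zsum_reflect; ring).
    replace (2 * zsum B g) with (zsum B g + zsum B (fun k => g (- k)%Z))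
      by (rewrite zsum_reflect; ring).
    rewrite <- !zsum_plus. apply zsum_ext; intros; apply Hfg. }
  replace (zsum B f) with (/ 2 * (2 * zsum B f)) by (field; apply RtoC_neq; lra).
  rewrite H2; field; apply RtoC_neq; lra.
Qed.

Lemma zsum_telescope B h :
  zsum B (fun k => h (k + 1)%Z - h k) = h (Z.of_nat B + 1)%Z - h (- Z.of_nat B)%Z.
Proof.
  induction B; [simpl; ring|].
  rewrite zsum_S, IHB.
  replace (- Z.of_nat (S B) + 1)%Z with (- Z.of_nat B)%Z by lia.
  replace (Z.of_nat B + 1)%Z with (Z.of_nat (S B)) by lia.
  ring.
Qed.

Lemma zsum_creative_telescoping B (a b : C) f g h :
  (forall k, a * f k - b * g k = h (k + 1)%Z - h k) ->
  h (Z.of_nat B + 1)%Z = 0 -> h (- Z.of_nat B)%Z = 0 ->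
  a * zsum B f = b * zsum B g.
Proof.
  intros Hstep Hright Hleft.
  assert (Hlin : zsum B (fun k => a * f k - b * g k) = a * zsum B f - b * zsum B g)
    by (clear Hstep Hright Hleft; induction B; simpl; [|rewrite IHB]; ring).
  rewrite (zsum_ext B _ _ (fun k _ => Hstep k)), zsum_telescope, Hright, Hleft in Hlin.
  replace (a * zsum B f) with (a * zsum B f - b * zsum B g + b * zsum B g) by ring.
  rewrite <- Hlin; ring.
Qed.

Lemma zsum_single B f (k0 : Z) : (Z.abs k0 <= Z.of_nat B)%Z ->
  (forall k, (- Z.of_nat B <= k <= Z.of_nat B)%Z -> k <> k0 -> f k = 0) ->
  zsum B f = f k0.
Proof.
  induction B; intros Hk0 Hf; [simpl; f_equal; lia|].
  rewrite zsum_S.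
  destruct (Z.eq_dec (Z.abs k0) (Z.of_nat (S B))) as [Habs|Habs].
  - rewrite zsum_eq0 by (intros k Hk; apply Hf; lia).
    destruct (Z.eq_dec k0 (Z.of_nat (S B))) as [->|Hneg].
    + rewrite (Hf (- Z.of_nat (S B))%Z) by lia; ring.
    + replace k0 with (- Z.of_nat (S B))%Z by lia.
      rewrite (Hf (Z.of_nat (S B))) by lia; ring.
  - rewrite IHB by (lia || (intros k Hk; apply Hf; lia)).
    rewrite (Hf (- Z.of_nat (S B))%Z), (Hf (Z.of_nat (S B))) by lia; ring.
Qed.

Lemma zsum_split B f :
  zsum B f + f (- Z.of_nat (S B))%Z
  = sum_n (fun i => f (Z.of_nat i)) B + sum_n (fun i => f (- Z.of_nat (S i))%Z) B.
Proof.
  induction B.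
  - rewrite !sum_O; reflexivity.
  - rewrite !sum_Sn, zsum_S.
    change (plus ?x ?y) with (x + y).
    transitivity (zsum B f + f (- Z.of_nat (S B))%Z + f (Z.of_nat (S B))
                  + f (- Z.of_nat (S (S B)))%Z);
      [ring | rewrite IHB; ring].
Qed.

Lemma zsum_swap_mul (B B' : nat) (a b : Z -> C) (f : Z -> Z -> C) :
  zsum B (fun j => a j * zsum B' (fun k => b k * f j k))
  = zsum B' (fun k => b k * zsum B (fun j => a j * f j k)).
Proof.
  transitivity (zsum B (fun j => zsum B' (fun k => a j * (b k * f j k)))).
  { apply zsum_ext; intros; rewrite <- zsum_scal; reflexivity. }
  rewrite zsum_swap. apply zsum_ext; intros; rewrite <- zsum_scal.
  apply zsum_ext; intros; ring.
Qed.

End BilateralSums.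

Lemma is_series_finite (a : nat -> C) (N : nat) :
  (forall k, (N < k)%nat -> a k = 0) -> is_series a (sum_n a N).
Proof.
  intros Ha. apply (filterlim_ext_loc (fun _ => sum_n a N)).
  - exists N. intros M HM. induction HM; [reflexivity|].
    rewrite sum_Sn, <- IHHM, Ha by lia. symmetry; apply Cplus_0_r.
  - apply filterlim_const.
Qed.

Lemma is_zseries_zsum (B : nat) (f : Z -> C) :
  (forall k, (Z.of_nat B < Z.abs k)%Z -> f k = 0) -> is_zseries f (zsum B f).
Proof.
  intros Hf.
  exists (sum_n (fun i => f (Z.of_nat i)) B), (sum_n (fun i => f (- Z.of_nat (S i))%Z) B).
  split; [|split].
  - apply is_series_finite; intros; apply Hf; lia.
  - apply is_series_finite; intros; apply Hf; lia.
  - rewrite <- zsum_split, (Hf (- Z.of_nat (S B))%Z) by lia. ring.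
Qed.

Lemma is_series_zsum (B : nat) (f : Z -> C) :
  (forall k, (k < 0 \/ Z.of_nat B < k)%Z -> f k = 0) ->
  is_series (fun i => f (Z.of_nat i)) (zsum B f).
Proof.
  intros Hf.
  assert (Hneg : sum_n (fun i => f (- Z.of_nat (S i))%Z) B = RtoC 0).
  { assert (Hf' : forall k, (k < 0)%Z -> f k = 0) by (intros; apply Hf; lia).
    clear Hf; induction B; [rewrite sum_O | rewrite sum_Sn, IHB]; rewrite Hf' by lia.
    - reflexivity.
    - apply Cplus_0_r. }
  replace (zsum B f) with (sum_n (fun i => f (Z.of_nat i)) B).
  - apply is_series_finite; intros; apply Hf; lia.
  - rewrite <- (Cplus_0_r (sum_n _ B)), <- Hneg, <- zsum_split, (Hf (- Z.of_nat (S B))%Z) by lia.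
    apply Cplus_0_r.
Qed.

Lemma recurrence_unique (x y a b : nat -> C) (d N : nat) :
  (forall i, (d <= i < N)%nat -> a i <> 0) ->
  (forall i, (d <= i < N)%nat -> a i * x (S i) = b i * x i) ->
  (forall i, (d <= i < N)%nat -> a i * y (S i) = b i * y i) ->
  x d = y d -> (d <= N)%nat -> x N = y N.
Proof.
  intros Ha Hx Hy Hd. induction N as [|N IH]; intros HN.
  - replace d with 0%nat in Hd by lia; exact Hd.
  - destruct (Nat.eq_dec d (S N)) as [<-|Hd']; [exact Hd|].
    assert (HN' : x N = y N)
      by (apply IH; [intros; apply Ha | intros; apply Hx | intros; apply Hy |]; lia).
    replace (x (S N)) with (/ a N * (a N * x (S N))) by (field; apply Ha; lia).
    rewrite Hx, HN', <- Hy by lia. field; apply Ha; lia.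
Qed.

Lemma pentagonal_minus (k : Z) : ((3 * k * k - k) / 2 = k * (k - 1) / 2 + k * k)%Z.
Proof.
  replace (3 * k * k - k)%Z with (k * (k - 1) + (k * k) * 2)%Z by ring.
  apply Z.div_add; lia.
Qed.

Lemma pentagonal_plus (k : Z) : ((3 * k * k + k) / 2 = k * (k - 1) / 2 + k * k + k)%Z.
Proof.
  replace (3 * k * k + k)%Z with (k * (k - 1) + (k * k + k) * 2)%Z by ring.
  rewrite Z.div_add by lia; ring.
Qed.

Section QSeries.

Variable q : C.
Hypothesis q_neq0 : q <> 0.

Lemma Czpow_nonneg (z : Z) : (0 <= z)%Z -> Czpow q z = Cpow q (Z.to_nat z).
Proof. destruct z; simpl; reflexivity || lia. Qed.

Lemma Czpow_nat (n : nat) : Czpow q (Z.of_nat n) = Cpow q n.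
Proof. rewrite Czpow_nonneg, Nat2Z.id by lia; reflexivity. Qed.

Lemma Czpow_1 : Czpow q 1 = q.
Proof. simpl; ring. Qed.

Lemma Czpow_neq0 (z : Z) : Czpow q z <> 0.
Proof.
  destruct z; simpl.
  - exact C1_nz.
  - now apply Cpow_nz.
  - intros H; apply C1_nz.
    rewrite <- (Cinv_l (Cpow q (Pos.to_nat p))), H by now apply Cpow_nz. ring.
Qed.

Lemma Czpow_nonpos (z : Z) : (z <= 0)%Z -> Czpow q z = / Cpow q (Z.to_nat (- z)).
Proof.
  destruct z; intros Hz; [|lia|reflexivity].
  change (RtoC 1 = / RtoC 1); field.
Qed.

Lemma Czpow_succ (z : Z) : Czpow q (z + 1) = Czpow q z * q.
Proof.
  destruct (Z_le_gt_dec 0 z).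
  - rewrite !Czpow_nonneg, Z2Nat.inj_add, Cpow_add_r by lia. simpl; ring.
  - rewrite !Czpow_nonpos by lia.
    replace (Z.to_nat (- z)) with (S (Z.to_nat (- (z + 1)))) by lia.
    simpl. field; split; [apply Cpow_nz|]; exact q_neq0.
Qed.

Lemma Czpow_add (a b : Z) : Czpow q (a + b) = Czpow q a * Czpow q b.
Proof.
  induction b as [|b IH|b IH] using Z.peano_ind.
  - rewrite Z.add_0_r; simpl; ring.
  - rewrite <- !Z.add_1_r, Z.add_assoc, !Czpow_succ, IH; ring.
  - assert (Ha : Czpow q (a + b) = Czpow q (a + Z.pred b) * q)
      by (rewrite <- Czpow_succ; f_equal; lia).
    assert (Hb : Czpow q b = Czpow q (Z.pred b) * q)
      by (rewrite <- Czpow_succ; f_equal; lia).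
    replace (Czpow q (a + Z.pred b)) with (Czpow q (a + b) / q)
      by (rewrite Ha; field; exact q_neq0).
    replace (Czpow q (Z.pred b)) with (Czpow q b / q)
      by (rewrite Hb; field; exact q_neq0).
    rewrite IH; field; exact q_neq0.
Qed.

Lemma Czpow_opp (a : Z) : Czpow q (- a) = / Czpow q a.
Proof.
  assert (H : Czpow q (- a) * Czpow q a = 1)
    by (rewrite <- Czpow_add, Z.add_opp_diag_l; reflexivity).
  replace (Czpow q (- a)) with (Czpow q (- a) * Czpow q a / Czpow q a)
    by (field; apply Czpow_neq0).
  rewrite H; field; apply Czpow_neq0.
Qed.

Lemma Czpow_sub (a b : Z) : Czpow q (a - b) = Czpow q a / Czpow q b.
Proof. unfold Z.sub; rewrite Czpow_add, Czpow_opp; reflexivity. Qed.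

Hypothesis q_not_unity : forall n : nat, (0 < n)%nat -> Cpow q n <> 1.

Lemma one_sub_Czpow_neq0 (z : Z) : z <> 0%Z -> 1 - Czpow q z <> 0.
Proof.
  intros Hz H.
  assert (Hone : Czpow q z = 1)
    by (replace (Czpow q z) with (1 - (1 - Czpow q z)) by ring; rewrite H; ring).
  destruct (Z_le_gt_dec 0 z).
  - apply (q_not_unity (Z.to_nat z)); [lia|].
    rewrite <- Czpow_nonneg by lia; exact Hone.
  - apply (q_not_unity (Z.to_nat (- z))); [lia|].
    rewrite <- Czpow_nonneg, Czpow_opp, Hone by lia. field.
Qed.

Lemma qpoch_succ (n : nat) : qpoch q (S n) = qpoch q n * (1 - Czpow q (Z.of_nat (S n))).
Proof. rewrite Czpow_nat; reflexivity. Qed.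

Lemma qpoch_neq0 (n : nat) : qpoch q n <> 0.
Proof.
  induction n as [|n IH]; [exact C1_nz|].
  rewrite qpoch_succ; apply Cmult_neq_0; [exact IH|].
  apply one_sub_Czpow_neq0; lia.
Qed.

Lemma qpoch_pred (z : Z) : (1 <= z)%Z ->
  qpoch q (Z.to_nat z) = qpoch q (Z.to_nat (z - 1)) * (1 - Czpow q z).
Proof.
  intros Hz. rewrite Czpow_nonneg by lia.
  replace (Z.to_nat z) with (S (Z.to_nat (z - 1))) by lia. reflexivity.
Qed.

Lemma qpoch_pred_nat (n : nat) : (1 <= n)%nat ->
  qpoch q n = qpoch q (n - 1) * (1 - Czpow q (Z.of_nat n)).
Proof. destruct n as [|n]; [lia|]. rewrite qpoch_succ, Nat.sub_succ, Nat.sub_0_r; reflexivity. Qed.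

Lemma qpinv_neg (z : Z) : (z < 0)%Z -> qpinv q z = 0.
Proof. intros Hz; unfold qpinv; rewrite (proj2 (Z.ltb_lt z 0) Hz); reflexivity. Qed.

Lemma qpinv_nonneg (z : Z) : (0 <= z)%Z -> qpinv q z = / qpoch q (Z.to_nat z).
Proof. intros Hz; unfold qpinv; rewrite (proj2 (Z.ltb_ge z 0) Hz); reflexivity. Qed.

Lemma qpinv_nat (n : nat) : qpinv q (Z.of_nat n) = / qpoch q n.
Proof. rewrite qpinv_nonneg, Nat2Z.id by lia; reflexivity. Qed.

Lemma qpinv_0 : qpinv q 0 = 1.
Proof. unfold qpinv; simpl; field. Qed.

Lemma qpoch_qpinv (n : nat) : qpoch q n * qpinv q (Z.of_nat n) = 1.
Proof. rewrite qpinv_nat; field; apply qpoch_neq0. Qed.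

Lemma qpoch_qpinv_eq (n : nat) (z : Z) : z = Z.of_nat n -> qpoch q n * qpinv q z = 1.
Proof. intros ->; apply qpoch_qpinv. Qed.

Lemma qpinv_pred (z : Z) : qpinv q (z - 1) = (1 - Czpow q z) * qpinv q z.
Proof.
  destruct (Z_le_gt_dec z 0).
  - rewrite (qpinv_neg (z - 1)) by lia.
    destruct (Z.eq_dec z 0) as [->|]; [simpl; ring|].
    rewrite qpinv_neg by lia; ring.
  - rewrite !qpinv_nonneg, (qpoch_pred z) by lia.
    field; split; [apply one_sub_Czpow_neq0; lia | apply qpoch_neq0].
Qed.

Lemma qpinv_shift (z w : Z) : z = (w - 1)%Z -> qpinv q z = (1 - Czpow q w) * qpinv q w.
Proof. intros ->; apply qpinv_pred. Qed.

(* [qpinv_to w] rewrites every [qpinv q z] with [z = w] or [z = w - 1] (as decided by [lia])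
   in terms of [qpinv q w]. *)
Ltac qpinv_to w :=
  repeat match goal with
  | |- context [qpinv q ?z] =>
      tryif constr_eq z w then fail
      else first [ rewrite (qpinv_shift z w) by lia | replace z with w by lia ]
  end.

Ltac expand_Czpow :=
  repeat rewrite ?Czpow_add, ?Czpow_sub, ?Czpow_opp, ?Czpow_1.

Ltac field_q :=
  field; repeat split; try apply Czpow_neq0; try apply qpoch_neq0; try exact q_neq0.

Definition qpinv2 (z k : Z) : C := qpinv q (z - k) * qpinv q (z + k).

Lemma qpinv2_abs (z k : Z) : qpinv2 z k = qpinv q (z - Z.abs k) * qpinv q (z + Z.abs k).
Proof.
  unfold qpinv2; destruct (Z.abs_spec k) as [[_ ->]|[_ ->]];
    [|rewrite Z.sub_opp_r, Z.add_opp_r]; ring.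
Qed.

Lemma qpinv2_eq0 (z k : Z) : (z < Z.abs k)%Z -> qpinv2 z k = 0.
Proof. intros Hz; rewrite qpinv2_abs, qpinv_neg by lia; ring. Qed.

Lemma qpinv2_pred (z k : Z) :
  qpinv2 (z - 1) k = (1 - Czpow q (z - k)) * (1 - Czpow q (z + k)) * qpinv2 z k.
Proof. unfold qpinv2. qpinv_to (z - k)%Z. qpinv_to (z + k)%Z. ring. Qed.

Definition qtri_sign (k : Z) : C := zsign k * Czpow q (k * (k - 1) / 2).

Lemma zsign_succ (k : Z) : zsign (k + 1) = - zsign k.
Proof.
  unfold zsign. destruct (Z_le_gt_dec 0 k).
  - replace (Z.abs_nat (k + 1)) with (S (Z.abs_nat k)) by lia. simpl; ring.
  - replace (Z.abs_nat k) with (S (Z.abs_nat (k + 1))) by lia. simpl; ring.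
Qed.

Lemma zsign_opp (k : Z) : zsign (- k) = zsign k.
Proof. unfold zsign; f_equal; lia. Qed.

Lemma qtri_sign_0 : qtri_sign 0 = 1.
Proof. unfold qtri_sign, zsign; simpl Z.abs_nat; simpl Cpow; simpl Czpow; ring. Qed.

Lemma qtri_sign_succ (k : Z) : qtri_sign (k + 1) = - Czpow q k * qtri_sign k.
Proof.
  unfold qtri_sign. rewrite zsign_succ.
  replace ((k + 1) * (k + 1 - 1))%Z with (k * (k - 1) + k * 2)%Z by ring.
  rewrite Z.div_add, Czpow_add by lia. ring.
Qed.

Lemma qtri_sign_opp (k : Z) : qtri_sign (- k) = Czpow q k * qtri_sign k.
Proof.
  unfold qtri_sign. rewrite zsign_opp.
  replace (- k * (- k - 1))%Z with (k * (k - 1) + k * 2)%Z by ring.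
  rewrite Z.div_add, Czpow_add by lia. ring.
Qed.

Definition qtri_sign_cert (M k : Z) : C :=
  qtri_sign k * qpinv q (M + 1 - k) * qpinv q (M + k)
  * (Czpow q (M + 1) * (Czpow q (M + 1) - 1) * Czpow q (- k) + Czpow q (M + 1) * (Czpow q M - 1)).

Lemma qtri_sign_cert_step (M k : Z) :
  (1 - Czpow q (M + 1 + (M + 1))) * (1 - Czpow q (M + 1 + M)) * (qtri_sign k * qpinv2 (M + 1) k)
  - (1 - Czpow q M) * (1 - Czpow q (M + 1)) * (qtri_sign k * qpinv2 M k)
  = qtri_sign_cert M (k + 1) - qtri_sign_cert M k.
Proof.
  unfold qtri_sign_cert, qpinv2. rewrite qtri_sign_succ.
  qpinv_to (M + 1 - k)%Z. qpinv_to (M + 1 + k)%Z.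
  expand_Czpow. field_q.
Qed.

Lemma qtri_sign_sum_rec (B : nat) (M : Z) : (M < Z.of_nat B)%Z ->
  (1 - Czpow q (M + 1 + (M + 1))) * (1 - Czpow q (M + 1 + M))
    * zsum B (fun k => qtri_sign k * qpinv2 (M + 1) k)
  = (1 - Czpow q M) * (1 - Czpow q (M + 1)) * zsum B (fun k => qtri_sign k * qpinv2 M k).
Proof.
  intros HM. apply (zsum_creative_telescoping _ _ _ _ _ (qtri_sign_cert M)).
  - intros k; apply qtri_sign_cert_step.
  - unfold qtri_sign_cert; rewrite (qpinv_neg (M + 1 - _)) by lia; ring.
  - unfold qtri_sign_cert; rewrite (qpinv_neg (M + _)) by lia; ring.
Qed.

Lemma qtri_sign_sum_delta (B : nat) (j : Z) : (j <= Z.of_nat B)%Z ->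
  zsum B (fun k => qtri_sign k * qpinv2 j k) = if (j =? 0)%Z then 1 else 0.
Proof.
  intros Hj. destruct (Z_lt_le_dec j 0) as [Hneg|Hnonneg].
  { rewrite (proj2 (Z.eqb_neq j 0)) by lia.
    apply zsum_eq0; intros; rewrite qpinv2_eq0 by lia; ring. }
  rewrite <- (Z2Nat.id j Hnonneg) in *.
  apply (recurrence_unique (fun i => zsum B (fun k => qtri_sign k * qpinv2 (Z.of_nat i) k))
    (fun i => if (Z.of_nat i =? 0)%Z then 1 else 0)
    (fun i => (1 - Czpow q (Z.of_nat i + 1 + (Z.of_nat i + 1)))
              * (1 - Czpow q (Z.of_nat i + 1 + Z.of_nat i)))
    (fun i => (1 - Czpow q (Z.of_nat i)) * (1 - Czpow q (Z.of_nat i + 1))) 0); lia || cbv beta.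
  - intros i _. apply Cmult_neq_0; apply one_sub_Czpow_neq0; lia.
  - intros i Hi. rewrite Nat2Z.inj_succ, <- Z.add_1_r. apply qtri_sign_sum_rec; lia.
  - intros [|i] _; cbn [Z.of_nat Z.eqb]; [simpl Czpow|]; ring.
  - cbn [Z.of_nat Z.eqb].
    rewrite (zsum_single _ _ 0%Z) by (lia || (intros k _ Hk; rewrite qpinv2_eq0 by lia; ring)).
    unfold qpinv2; rewrite qtri_sign_0, Z.sub_0_r, Z.add_0_r, qpinv_0; ring.
Qed.

Definition vandermonde_summand (u N k j : Z) : C :=
  Czpow q ((u - j) * (N - j)) * qpinv q (u - j) * qpinv q (N - j) * qpinv2 j k.

Definition vandermonde_cert (u N k j : Z) : C :=
  - Czpow q (N + 1) * Czpow q (- j) * Czpow q ((u - j) * (N + 1 - j))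
  * qpinv q (u - j) * qpinv q (N + 1 - j) * qpinv2 (j - 1) k.

Lemma vandermonde_cert_step (u N k j : Z) :
  (1 - Czpow q (N + 1 - k)) * (1 - Czpow q (N + 1 + k)) * vandermonde_summand u (N + 1) k j
  - (1 - Czpow q (N + 1 + u)) * vandermonde_summand u N k j
  = vandermonde_cert u N k (j + 1) - vandermonde_cert u N k j.
Proof.
  unfold vandermonde_summand, vandermonde_cert, qpinv2.
  replace ((u - j) * (N - j))%Z with ((u - j) * (N + 1 - j) - u + j)%Z by ring.
  replace ((u - (j + 1)) * (N + 1 - (j + 1)))%Z
    with ((u - j) * (N + 1 - j) - u - N - 1 + j + j + 1)%Z by ring.
  qpinv_to (u - j)%Z. qpinv_to (N + 1 - j)%Z. qpinv_to (j - k)%Z. qpinv_to (j + k)%Z.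
  expand_Czpow. field_q.
Qed.

Lemma vandermonde_sum_rec (B : nat) (u N k : Z) : (u <= Z.of_nat B)%Z ->
  (1 - Czpow q (N + 1 - k)) * (1 - Czpow q (N + 1 + k)) * zsum B (vandermonde_summand u (N + 1) k)
  = (1 - Czpow q (N + 1 + u)) * zsum B (vandermonde_summand u N k).
Proof.
  intros Hu. apply (zsum_creative_telescoping _ _ _ _ _ (vandermonde_cert u N k)).
  - intros j; apply vandermonde_cert_step.
  - unfold vandermonde_cert; rewrite (qpinv_neg (u - _)) by lia; ring.
  - unfold vandermonde_cert; rewrite (qpinv2_eq0 (_ - 1)) by lia; ring.
Qed.

Lemma vandermonde_sum_base (B u : nat) (k : Z) : (Z.abs k <= Z.of_nat B)%Z ->
  zsum B (vandermonde_summand (Z.of_nat u) (Z.abs k) k)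
  = qpoch q (Z.abs_nat k + u) * qpinv2 (Z.of_nat u) k * qpinv2 (Z.abs k) k.
Proof.
  intros Hk.
  rewrite (zsum_single _ _ (Z.abs k)) by (lia || (intros j _ Hj; unfold vandermonde_summand;
    destruct (Z_lt_le_dec j (Z.abs k));
    [rewrite (qpinv2_eq0 j) | rewrite (qpinv_neg (Z.abs k - j))]; lia || ring)).
  unfold vandermonde_summand.
  rewrite Z.sub_diag, Z.mul_0_r, qpinv_0, (qpinv2_abs (Z.of_nat u) k).
  transitivity (qpinv q (Z.of_nat u - Z.abs k) * qpinv2 (Z.abs k) k
    * (qpoch q (Z.abs_nat k + u) * qpinv q (Z.of_nat u + Z.abs k)));
    [rewrite qpoch_qpinv_eq by lia; simpl Czpow | ]; ring.
Qed.

Lemma qchu_vandermonde (B u N : nat) (k : Z) : (N + u <= B)%nat ->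
  zsum B (vandermonde_summand (Z.of_nat u) (Z.of_nat N) k)
  = qpoch q (N + u) * qpinv2 (Z.of_nat u) k * qpinv2 (Z.of_nat N) k.
Proof.
  intros HB.
  destruct (Z_lt_le_dec (Z.of_nat N) (Z.abs k)) as [Hsmall|Hlarge].
  { rewrite (qpinv2_eq0 (Z.of_nat N)) by exact Hsmall.
    rewrite zsum_eq0; [ring|].
    intros j _; unfold vandermonde_summand.
    destruct (Z_lt_le_dec (Z.of_nat N) j).
    - rewrite (qpinv_neg (Z.of_nat N - j)) by lia; ring.
    - rewrite (qpinv2_eq0 j) by lia; ring. }
  apply (recurrence_unique
    (fun i => zsum B (vandermonde_summand (Z.of_nat u) (Z.of_nat i) k))
    (fun i => qpoch q (i + u) * qpinv2 (Z.of_nat u) k * qpinv2 (Z.of_nat i) k)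
    (fun i => (1 - Czpow q (Z.of_nat i + 1 - k)) * (1 - Czpow q (Z.of_nat i + 1 + k)))
    (fun i => 1 - Czpow q (Z.of_nat i + 1 + Z.of_nat u)) (Z.abs_nat k) N); try lia.
  - intros i Hi; apply Cmult_neq_0; apply one_sub_Czpow_neq0; lia.
  - intros i Hi. rewrite Nat2Z.inj_succ, <- Z.add_1_r. apply vandermonde_sum_rec; lia.
  - intros i Hi. cbv beta.
    replace (S i + u)%nat with (S (i + u)) by lia.
    replace (qpinv2 (Z.of_nat i) k) with (qpinv2 (Z.of_nat (S i) - 1) k) by (f_equal; lia).
    rewrite qpoch_succ, qpinv2_pred.
    replace (Z.of_nat (S (i + u))) with (Z.of_nat i + 1 + Z.of_nat u)%Z by lia.
    replace (Z.of_nat (S i)) with (Z.of_nat i + 1)%Z by lia.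
    ring.
  - cbv beta. rewrite Nat2Z.inj_abs_nat. apply vandermonde_sum_base; lia.
Qed.

Definition bailey_alpha (u : nat) (k : Z) : C := qtri_sign k * qpoch q u * qpinv2 (Z.of_nat u) k.

Lemma bailey_pair_qpow (B u N : nat) : (N + u <= B)%nat ->
  zsum B (fun k => bailey_alpha u k * qpinv2 (Z.of_nat N) k)
  = Czpow q (Z.of_nat u * Z.of_nat N) * qpinv q (Z.of_nat N) * qpinv q (Z.of_nat (N + u)).
Proof.
  intros HB.
  set (c := qpoch q u * qpinv q (Z.of_nat (N + u))).
  set (V := vandermonde_summand (Z.of_nat u) (Z.of_nat N)).
  transitivity (c * zsum B (fun j => zsum B (fun k => qtri_sign k * V k j))).
  { rewrite <- zsum_swap, <- zsum_scal. apply zsum_ext; intros k _.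
    rewrite zsum_scal. unfold V; rewrite qchu_vandermonde by lia.
    unfold bailey_alpha, c.
    transitivity (qtri_sign k * qpoch q u * qpinv2 (Z.of_nat u) k * qpinv2 (Z.of_nat N) k
      * (qpoch q (N + u) * qpinv q (Z.of_nat (N + u)))); [rewrite qpoch_qpinv|]; ring. }
  transitivity (c * zsum B (fun j => Czpow q ((Z.of_nat u - j) * (Z.of_nat N - j))
    * qpinv q (Z.of_nat u - j) * qpinv q (Z.of_nat N - j) * (if (j =? 0)%Z then 1 else 0))).
  { f_equal. apply zsum_ext; intros j Hj.
    rewrite <- (qtri_sign_sum_delta B j), <- zsum_scal by lia.
    apply zsum_ext; intros; unfold V, vandermonde_summand; ring. }
  rewrite (zsum_single B _ 0%Z)
    by (lia || (intros j _ Hj; rewrite (proj2 (Z.eqb_neq j 0) Hj); ring)).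
  unfold c; cbn [Z.eqb]; rewrite !Z.sub_0_r.
  transitivity (Czpow q (Z.of_nat u * Z.of_nat N) * qpinv q (Z.of_nat N)
    * qpinv q (Z.of_nat (N + u))
    * (qpoch q u * qpinv q (Z.of_nat u))); [|rewrite qpoch_qpinv]; ring.
Qed.

Definition saalschutz_weight (l m n j : Z) : C :=
  Czpow q (j * j) * qpoch q (Z.to_nat (l + m + n - j))
  * qpinv q (l - j) * qpinv q (m - j) * qpinv q (n - j).

Definition saalschutz_cert (l m n k j : Z) : C :=
  - Czpow q (n + 1) * Czpow q (j * j - j) * qpoch q (Z.to_nat (l + m + n + 1 - j))
  * qpinv q (l - j) * qpinv q (m - j) * qpinv q (n + 1 - j) * qpinv2 (j - 1) k.

Lemma saalschutz_cert_step (l m n k j : Z) : (0 <= m)%Z -> (0 <= n)%Z ->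
  (1 - Czpow q (n + 1 - k)) * (1 - Czpow q (n + 1 + k))
    * (saalschutz_weight l m (n + 1) j * qpinv2 j k)
  - (1 - Czpow q (l + n + 1)) * (1 - Czpow q (m + n + 1)) * (saalschutz_weight l m n j * qpinv2 j k)
  = saalschutz_cert l m n k (j + 1) - saalschutz_cert l m n k j.
Proof.
  intros Hm Hn. unfold saalschutz_weight, saalschutz_cert, qpinv2.
  destruct (Z_le_gt_dec j (l + m + n)) as [Hj|Hj].
  - replace (l + m + (n + 1) - j)%Z with (l + m + n + 1 - j)%Z by ring.
    rewrite (qpoch_pred (l + m + n + 1 - j)) by lia.
    replace (l + m + n + 1 - j - 1)%Z with (l + m + n - j)%Z by ring.
    replace (l + m + n + 1 - (j + 1))%Z with (l + m + n - j)%Z by ring.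
    replace ((j + 1) * (j + 1) - (j + 1))%Z with (j * j + j)%Z by ring.
    qpinv_to (l - j)%Z. qpinv_to (m - j)%Z. qpinv_to (n + 1 - j)%Z.
    qpinv_to (j - k)%Z. qpinv_to (j + k)%Z.
    expand_Czpow. field_q.
  - (* the truncated [Z.to_nat] arguments are junk here, but [qpinv q (l - j)] vanishes *)
    rewrite (qpinv_neg (l - j)), (qpinv_neg (l - (j + 1))) by lia; ring.
Qed.

Definition saalschutz_value (l m n : nat) (k : Z) : C :=
  Czpow q (k * k) * qpoch q (l + m) * qpoch q (l + n) * qpoch q (m + n)
  * qpinv2 (Z.of_nat l) k * qpinv2 (Z.of_nat m) k * qpinv2 (Z.of_nat n) k.

Lemma saalschutz_sum_rec (B : nat) (l m n k : Z) :
  (l <= Z.of_nat B)%Z -> (0 <= m)%Z -> (0 <= n)%Z ->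
  (1 - Czpow q (n + 1 - k)) * (1 - Czpow q (n + 1 + k))
    * zsum B (fun j => saalschutz_weight l m (n + 1) j * qpinv2 j k)
  = (1 - Czpow q (l + n + 1)) * (1 - Czpow q (m + n + 1))
    * zsum B (fun j => saalschutz_weight l m n j * qpinv2 j k).
Proof.
  intros Hl Hm Hn. apply (zsum_creative_telescoping _ _ _ _ _ (saalschutz_cert l m n k)).
  - intros j; apply saalschutz_cert_step; assumption.
  - unfold saalschutz_cert; rewrite (qpinv_neg (l - _)) by lia; ring.
  - unfold saalschutz_cert; rewrite (qpinv2_eq0 (_ - 1)) by lia; ring.
Qed.

Lemma saalschutz_sum_base (B l m : nat) (k : Z) : (Z.abs k <= Z.of_nat B)%Z ->
  zsum B (fun j => saalschutz_weight (Z.of_nat l) (Z.of_nat m) (Z.abs k) j * qpinv2 j k)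
  = Czpow q (k * k) * qpoch q (l + m) * qpoch q (l + Z.abs_nat k) * qpoch q (m + Z.abs_nat k)
    * qpinv2 (Z.of_nat l) k * qpinv2 (Z.of_nat m) k * qpinv2 (Z.abs k) k.
Proof.
  intros Hk.
  rewrite (zsum_single _ _ (Z.abs k)) by (lia || (intros j _ Hj; unfold saalschutz_weight;
    destruct (Z_lt_le_dec j (Z.abs k));
    [rewrite (qpinv2_eq0 j) | rewrite (qpinv_neg (Z.abs k - j))]; lia || ring)).
  unfold saalschutz_weight.
  replace (Z.to_nat (Z.of_nat l + Z.of_nat m + Z.abs k - Z.abs k)) with (l + m)%nat by lia.
  rewrite Z.sub_diag, qpinv_0, Z.abs_square.
  rewrite (qpinv2_abs (Z.of_nat l) k), (qpinv2_abs (Z.of_nat m) k).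
  transitivity (Czpow q (k * k) * qpoch q (l + m) * qpinv q (Z.of_nat l - Z.abs k)
    * qpinv q (Z.of_nat m - Z.abs k) * qpinv2 (Z.abs k) k
    * (qpoch q (l + Z.abs_nat k) * qpinv q (Z.of_nat l + Z.abs k))
    * (qpoch q (m + Z.abs_nat k) * qpinv q (Z.of_nat m + Z.abs k)));
    [rewrite !qpoch_qpinv_eq by lia | ]; ring.
Qed.

Lemma qsaalschutz (B l m n : nat) (k : Z) : (l + m + n <= B)%nat ->
  zsum B (fun j => saalschutz_weight (Z.of_nat l) (Z.of_nat m) (Z.of_nat n) j * qpinv2 j k)
  = saalschutz_value l m n k.
Proof.
  intros HB. unfold saalschutz_value.
  destruct (Z_lt_le_dec (Z.of_nat n) (Z.abs k)) as [Hsmall|Hlarge].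
  { rewrite (qpinv2_eq0 (Z.of_nat n)) by exact Hsmall.
    rewrite zsum_eq0; [ring|].
    intros j _; unfold saalschutz_weight.
    destruct (Z_lt_le_dec (Z.of_nat n) j).
    - rewrite (qpinv_neg (Z.of_nat n - j)) by lia; ring.
    - rewrite (qpinv2_eq0 j) by lia; ring. }
  apply (recurrence_unique
    (fun i => zsum B (fun j =>
       saalschutz_weight (Z.of_nat l) (Z.of_nat m) (Z.of_nat i) j * qpinv2 j k))
    (fun i => Czpow q (k * k) * qpoch q (l + m) * qpoch q (l + i) * qpoch q (m + i)
              * qpinv2 (Z.of_nat l) k * qpinv2 (Z.of_nat m) k * qpinv2 (Z.of_nat i) k)
    (fun i => (1 - Czpow q (Z.of_nat i + 1 - k)) * (1 - Czpow q (Z.of_nat i + 1 + k)))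
    (fun i => (1 - Czpow q (Z.of_nat l + Z.of_nat i + 1))
              * (1 - Czpow q (Z.of_nat m + Z.of_nat i + 1))) (Z.abs_nat k) n); try lia.
  - intros i Hi; apply Cmult_neq_0; apply one_sub_Czpow_neq0; lia.
  - intros i Hi. rewrite Nat2Z.inj_succ, <- Z.add_1_r. apply saalschutz_sum_rec; lia.
  - intros i Hi. cbv beta.
    replace (l + S i)%nat with (S (l + i)) by lia.
    replace (m + S i)%nat with (S (m + i)) by lia.
    replace (qpinv2 (Z.of_nat i) k) with (qpinv2 (Z.of_nat (S i) - 1) k) by (f_equal; lia).
    rewrite !qpoch_succ, qpinv2_pred.
    replace (Z.of_nat (S (l + i))) with (Z.of_nat l + Z.of_nat i + 1)%Z by lia.
    replace (Z.of_nat (S (m + i))) with (Z.of_nat m + Z.of_nat i + 1)%Z by lia.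
    replace (Z.of_nat (S i)) with (Z.of_nat i + 1)%Z by lia.
    ring.
  - cbv beta. rewrite Nat2Z.inj_abs_nat. apply saalschutz_sum_base; lia.
Qed.

Lemma bailey_lemma (B l m n u : nat) : (l + m + n + u <= B)%nat ->
  zsum B (fun j => saalschutz_weight (Z.of_nat l) (Z.of_nat m) (Z.of_nat n) j
                   * Czpow q (Z.of_nat u * j) * qpinv q j * qpinv q (j + Z.of_nat u))
  = zsum B (fun k => bailey_alpha u k * saalschutz_value l m n k).
Proof.
  intros HB.
  set (X := saalschutz_weight (Z.of_nat l) (Z.of_nat m) (Z.of_nat n)).
  transitivity (zsum B (fun j => X j * zsum B (fun k => bailey_alpha u k * qpinv2 j k))).
  - apply zsum_ext; intros j Hj.
    destruct (Z_lt_le_dec j 0) as [Hneg|Hnonneg].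
    { rewrite (qpinv_neg j), zsum_eq0 by (lia || (intros; rewrite qpinv2_eq0 by lia; ring)); ring. }
    destruct (Z_le_gt_dec j (Z.of_nat l)) as [Hl|Hl].
    + rewrite <- (Z2Nat.id j Hnonneg), bailey_pair_qpow, Nat2Z.inj_add by lia; ring.
    + unfold X, saalschutz_weight; rewrite (qpinv_neg (_ - j)) by lia; ring.
  - rewrite zsum_swap_mul. apply zsum_ext; intros k _.
    unfold X; rewrite qsaalschutz by lia; reflexivity.
Qed.

Section Identities.

Variables l m n u : nat.
Definition lhs_term (a k : nat) : C :=
  Cpow q (k * k + a * k) * qpoch q (l + m + n - k)
  * / qpoch q k
  * qpinv q (Z.of_nat l - Z.of_nat k) * qpinv q (Z.of_nat m - Z.of_nat k)
  * qpinv q (Z.of_nat n - Z.of_nat k) * / qpoch q (u + k).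

Definition rhs_term_minus (k : Z) : C :=
  zsign k * Cpow q (Z.to_nat ((3 * k * k - k) / 2))
  * qpoch q (l + m) * qpoch q (l + n) * qpoch q (m + n) * qpoch q (u - 1)
  * qpinv q (Z.of_nat l - k) * qpinv q (Z.of_nat m - k)
  * qpinv q (Z.of_nat n - k) * qpinv q (Z.of_nat u - k)
  * qpinv q (Z.of_nat l + k) * qpinv q (Z.of_nat m + k)
  * qpinv q (Z.of_nat n + k) * qpinv q (Z.of_nat u + k - 1).

Definition rhs_term_plus (k : Z) : C :=
  zsign k * Cpow q (Z.to_nat ((3 * k * k + k) / 2))
  * qpoch q (l + m) * qpoch q (m + n) * qpoch q (l + n) * qpoch q (u - 1)
  * qpinv q (Z.of_nat l - k) * qpinv q (Z.of_nat m - k)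
  * qpinv q (Z.of_nat n - k) * qpinv q (Z.of_nat u - k)
  * qpinv q (Z.of_nat l + k) * qpinv q (Z.of_nat m + k)
  * qpinv q (Z.of_nat n + k) * qpinv q (Z.of_nat u + k - 1).

Definition bailey_summand (a v : nat) (j : Z) : C :=
  saalschutz_weight (Z.of_nat l) (Z.of_nat m) (Z.of_nat n) j
  * Czpow q (Z.of_nat a * j) * qpinv q j * qpinv q (j + Z.of_nat v).

Let B := (l + m + n + u)%nat.

Lemma lhs_term_eq (a k : nat) : lhs_term a k = bailey_summand a u (Z.of_nat k).
Proof.
  unfold lhs_term, bailey_summand, saalschutz_weight.
  rewrite Cpow_add_r, <- !Czpow_nat, !Nat2Z.inj_mul.
  replace (Z.of_nat k + Z.of_nat u)%Z with (Z.of_nat (u + k)) by lia.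
  rewrite !qpinv_nat.
  replace (Z.to_nat (Z.of_nat l + Z.of_nat m + Z.of_nat n - Z.of_nat k)) with (l + m + n - k)%nat
    by lia.
  ring.
Qed.

Lemma is_series_lhs_term (a : nat) : is_series (lhs_term a) (zsum B (bailey_summand a u)).
Proof.
  apply (is_series_ext (fun k => bailey_summand a u (Z.of_nat k))).
  { intros k; symmetry; apply lhs_term_eq. }
  apply is_series_zsum; intros j [Hj|Hj]; unfold bailey_summand, saalschutz_weight.
  - rewrite (qpinv_neg j) by exact Hj; ring.
  - rewrite (qpinv_neg (Z.of_nat l - j)) by (unfold B in Hj; lia); ring.
Qed.

Lemma is_zseries_rhs_term_minus : is_zseries rhs_term_minus (zsum B rhs_term_minus).
Proof.
  apply is_zseries_zsum; intros k Hk; unfold rhs_term_minus, B in *.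
  destruct (Z_lt_le_dec 0 k).
  - rewrite (qpinv_neg (Z.of_nat l - k)) by lia; ring.
  - rewrite (qpinv_neg (Z.of_nat l + k)) by lia; ring.
Qed.

Lemma is_zseries_rhs_term_plus : is_zseries rhs_term_plus (zsum B rhs_term_plus).
Proof.
  apply is_zseries_zsum; intros k Hk; unfold rhs_term_plus, B in *.
  destruct (Z_lt_le_dec 0 k).
  - rewrite (qpinv_neg (Z.of_nat l - k)) by lia; ring.
  - rewrite (qpinv_neg (Z.of_nat l + k)) by lia; ring.
Qed.

Hypothesis u_pos : (1 <= u)%nat.

Lemma rhs_term_minus_symmetric (k : Z) :
  rhs_term_minus k + rhs_term_minus (- k)
  = bailey_alpha u k * saalschutz_value l m n k
    + bailey_alpha u (- k) * saalschutz_value l m n (- k).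
Proof.
  unfold rhs_term_minus, bailey_alpha, saalschutz_value, qpinv2.
  rewrite !qtri_sign_opp, zsign_opp.
  replace (3 * - k * - k - - k)%Z with (3 * k * k + k)%Z by ring.
  replace (- k * - k)%Z with (k * k)%Z by ring.
  rewrite <- !Czpow_nonneg by (apply Z.div_pos; nia).
  rewrite pentagonal_minus, pentagonal_plus, (qpoch_pred_nat u) by exact u_pos.
  unfold qtri_sign.
  qpinv_to (Z.of_nat l - k)%Z. qpinv_to (Z.of_nat l + k)%Z.
  qpinv_to (Z.of_nat m - k)%Z. qpinv_to (Z.of_nat m + k)%Z.
  qpinv_to (Z.of_nat n - k)%Z. qpinv_to (Z.of_nat n + k)%Z.
  qpinv_to (Z.of_nat u - k)%Z. qpinv_to (Z.of_nat u + k)%Z.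
  expand_Czpow. field_q.
Qed.

Lemma rhs_term_plus_symmetric (k : Z) :
  rhs_term_plus k + rhs_term_plus (- k)
  = (bailey_alpha (u - 1) k * saalschutz_value l m n k
     + Czpow q (Z.of_nat u) * (bailey_alpha u k * saalschutz_value l m n k))
    + (bailey_alpha (u - 1) (- k) * saalschutz_value l m n (- k)
     + Czpow q (Z.of_nat u) * (bailey_alpha u (- k) * saalschutz_value l m n (- k))).
Proof.
  unfold rhs_term_plus, bailey_alpha, saalschutz_value, qpinv2.
  rewrite !qtri_sign_opp, zsign_opp.
  replace (3 * - k * - k + - k)%Z with (3 * k * k - k)%Z by ring.
  replace (- k * - k)%Z with (k * k)%Z by ring.
  rewrite <- !Czpow_nonneg by (apply Z.div_pos; nia).
  rewrite pentagonal_minus, pentagonal_plus, (qpoch_pred_nat u) by exact u_pos.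
  unfold qtri_sign.
  qpinv_to (Z.of_nat l - k)%Z. qpinv_to (Z.of_nat l + k)%Z.
  qpinv_to (Z.of_nat m - k)%Z. qpinv_to (Z.of_nat m + k)%Z.
  qpinv_to (Z.of_nat n - k)%Z. qpinv_to (Z.of_nat n + k)%Z.
  qpinv_to (Z.of_nat u - k)%Z. qpinv_to (Z.of_nat u + k)%Z.
  expand_Czpow. field_q.
Qed.

Lemma zsum_bailey_summand_minus : zsum B (bailey_summand u u) = zsum B rhs_term_minus.
Proof.
  unfold bailey_summand; rewrite bailey_lemma by (unfold B; lia).
  apply zsum_symmetric; intros k; symmetry; apply rhs_term_minus_symmetric.
Qed.

Lemma zsum_bailey_summand_plus : zsum B (bailey_summand (u - 1) u) = zsum B rhs_term_plus.
Proof.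
  (* by 1/(q)_(j+u-1) = (1 - q^(j+u)) / (q)_(j+u) *)
  transitivity (zsum B (bailey_summand (u - 1) (u - 1))
                + Czpow q (Z.of_nat u) * zsum B (bailey_summand u u)).
  { rewrite <- zsum_scal, <- zsum_plus. apply zsum_ext; intros j _.
    unfold bailey_summand.
    replace (Z.of_nat u * j)%Z with (Z.of_nat (u - 1) * j + j)%Z
      by (rewrite Nat2Z.inj_sub by exact u_pos; ring).
    qpinv_to (j + Z.of_nat u)%Z.
    expand_Czpow. field_q. }
  unfold bailey_summand; rewrite !bailey_lemma by (unfold B; lia).
  rewrite <- zsum_scal, <- zsum_plus.
  apply zsum_symmetric; intros k; symmetry; apply rhs_term_plus_symmetric.
Qed.

End Identities.

End QSeries.

Lemma Cpow_neq1_of_Cmod_lt1 (q : C) (n : nat) : (Cmod q < 1)%R -> (0 < n)%nat -> Cpow q n <> 1.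
Proof.
  intros Hq Hn H. apply (f_equal Cmod) in H.
  rewrite Cmod_pow, Cmod_1 in H.
  assert (Cmod q ^ n < 1)%R by (apply pow_lt_1_compat; [split; [apply Cmod_ge_0|]|]; lia || lra).
  lra.
Qed.

Theorem corollary5p6 (q : Complex.C) (l m n u : nat)
  (hq0 : (0 < Cmod q)%R) (hq1 : (Cmod q < 1)%R) (hu : (1 <= u)%nat) :
  (exists s : Complex.C,
     is_series (fun k : nat =>
       Cpow q (k * k + u * k) * qpoch q (l + m + n - k)
       * / qpoch q k
       * qpinv q (Z.of_nat l - Z.of_nat k) * qpinv q (Z.of_nat m - Z.of_nat k)
       * qpinv q (Z.of_nat n - Z.of_nat k) * / qpoch q (u + k)) s /\
     is_zseries (fun k : Z =>
       zsign k * Cpow q (Z.to_nat ((3 * k * k - k) / 2))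
       * qpoch q (l + m) * qpoch q (l + n) * qpoch q (m + n) * qpoch q (u - 1)
       * qpinv q (Z.of_nat l - k) * qpinv q (Z.of_nat m - k)
       * qpinv q (Z.of_nat n - k) * qpinv q (Z.of_nat u - k)
       * qpinv q (Z.of_nat l + k) * qpinv q (Z.of_nat m + k)
       * qpinv q (Z.of_nat n + k) * qpinv q (Z.of_nat u + k - 1)) s)
  /\
  (exists s : Complex.C,
     is_series (fun k : nat =>
       Cpow q (k * k + (u - 1) * k) * qpoch q (l + m + n - k)
       * / qpoch q k
       * qpinv q (Z.of_nat l - Z.of_nat k) * qpinv q (Z.of_nat m - Z.of_nat k)
       * qpinv q (Z.of_nat n - Z.of_nat k) * / qpoch q (u + k)) s /\
     is_zseries (fun k : Z =>
       zsign k * Cpow q (Z.to_nat ((3 * k * k + k) / 2))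
       * qpoch q (l + m) * qpoch q (m + n) * qpoch q (l + n) * qpoch q (u - 1)
       * qpinv q (Z.of_nat l - k) * qpinv q (Z.of_nat m - k)
       * qpinv q (Z.of_nat n - k) * qpinv q (Z.of_nat u - k)
       * qpinv q (Z.of_nat l + k) * qpinv q (Z.of_nat m + k)
       * qpinv q (Z.of_nat n + k) * qpinv q (Z.of_nat u + k - 1)) s).
Proof.
  assert (q_neq0 : q <> 0) by (intros ->; rewrite Cmod_0 in hq0; lra).
  assert (q_not_unity : forall k, (0 < k)%nat -> Cpow q k <> 1)
    by (intros; apply Cpow_neq1_of_Cmod_lt1; assumption).
  split.
  - exists (zsum (l + m + n + u) (rhs_term_minus q l m n u)); split.
    + rewrite <- zsum_bailey_summand_minus by assumption. apply is_series_lhs_term.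
    + apply is_zseries_rhs_term_minus.
  - exists (zsum (l + m + n + u) (rhs_term_plus q l m n u)); split.
    + rewrite <- zsum_bailey_summand_plus by assumption. apply is_series_lhs_term.
    + apply is_zseries_rhs_term_plus.
Qed.
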